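(* Let $\ell\ge 1$, let $R$ be a path in $H_\ell$ and let $h\in\{1,\dots,\ell\}$. Then there are at most $2$ vertices $v_{h',j}$ with $|h'|=h$ that are turn vertices of $R$.
   Context: For an integer $\ell\ge 1$, $H_\ell$ is the graph with vertex set $V_\ell=\{v_{h,j} : h\in\{-\ell,\dots,\ell\},\ j\in\{1,\dots,2^{\ell-|h|}\}\}$ and with the following edges: (1) $v_{h,j}v_{h-1,2j-1}$ and $v_{h,j}v_{h-1,2j}$ for every $h\in\{1,\dots,\ell\}$ and $j\in\{1,\dots,2^{\ell-h}\}$; (2) $v_{h,j}v_{h+1,2j-1}$ and $v_{h,j}v_{h+1,2j}$ for every $h\in\{-\ell,\dots,-1\}$ and $j\in\{1,\dots,2^{\ell-|h|}\}$; (3) the edge $v_{\ell,1}v_{-\ell,1}$; (4) the edges $v_{0,2j-1}v_{0,2j}$ for every $j\in\{1,\dots,2^{\ell-1}\}$. For a path $R$ in $H_\ell$ and a vertex $v_{h,k}$ of $R$, let $\deg_R(v_{h,k})$ be its degree in $R$. The vertex $v_{h,k}$ is a turn vertex of $R$ if $h\neq 0$, $\deg_R(v_{h,k})=2$, and its two neighbours on $R$ are $v_{h',2k-1}$ and $v_{h',2k}$, where $h'=h-1$ if $h>0$ and $h'=h+1$ if $h<0$ (i.e., both path-neighbours are its two children in its tree). *)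

From mathcomp Require Import all_boot all_order all_algebra.
Set Implicit Arguments. Unset Strict Implicit. Unset Printing Implicit Defensive.
Import Order.TTheory GRing.Theory Num.Theory.

(* A vertex v_{h,j} of H_l is represented by the pair (h, j) : int * nat. *)
Definition vtx := (int * nat)%type.

Definition inV (l : nat) (v : vtx) : bool :=
  (absz v.1 <= l)%N && (1 <= v.2 <= 2 ^ (l - absz v.1))%N.

Definition edgeH (l : nat) (u w : vtx) : bool :=
  has (fun h : nat =>
     has (fun j : nat =>
        (u == ((Posz h), j)) &&
        ((w == ((Posz h - 1)%R, (j.*2).-1)) || (w == ((Posz h - 1)%R, j.*2))))
     (iota 1 (2 ^ (l - h))))
   (iota 1 l)
  ||
  has (fun h : nat =>
     has (fun j : nat =>
        (u == ((- Posz h)%R, j)) &&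
        ((w == ((- Posz h + 1)%R, (j.*2).-1)) || (w == ((- Posz h + 1)%R, j.*2))))
     (iota 1 (2 ^ (l - h))))
   (iota 1 l)
  ||
  ((u == ((Posz l), 1%N)) && (w == ((- Posz l)%R, 1%N)))
  ||
  has (fun j : nat => (u == (0%Z, (j.*2).-1)) && (w == (0%Z, j.*2)))
      (iota 1 (2 ^ (l - 1))).

Definition adjH (l : nat) (u w : vtx) : bool := edgeH l u w || edgeH l w u.

Definition pedges (R : seq vtx) : seq (vtx * vtx) := zip R (behead R).

Definition is_path (l : nat) (R : seq vtx) : bool :=
  [&& R != [::], uniq R, all (inV l) R &
      all (fun e => adjH l e.1 e.2) (pedges R)].

Definition path_nbrs (R : seq vtx) (v : vtx) : seq vtx :=
  [seq (if e.1 == v then e.2 else e.1) | e <- pedges R & (e.1 == v) || (e.2 == v)].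

Definition degR (R : seq vtx) (v : vtx) : nat := size (path_nbrs R v).

Definition child_level (h : int) : int := if (0 < h)%R then (h - 1)%R else (h + 1)%R.

Definition turn_vertex (R : seq vtx) (v : vtx) : bool :=
  [&& v \in R, v.1 != 0%Z, degR R v == 2%N &
      perm_eq (path_nbrs R v)
        [:: (child_level v.1, (v.2.*2).-1); (child_level v.1, v.2.*2)]].

From mathcomp Require Import all_boot all_order all_algebra zify.
Set Implicit Arguments. Unset Strict Implicit. Unset Printing Implicit Defensive.

(* For |h'| <= h, call block of v_{h',j} the index of its ancestor at level
   +-h.  The vertices with |h'| <= h split into blocks, each made of the two
   binary trees of depth h hanging from the roots v_{h,j} and v_{-h,j}, glued
   along level 0; every edge of H_l between two such vertices stays inside a
   block.  As an edge changes |h'| by at most one, a path enters or leaves a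
   block only through one of its two roots.  Both path-neighbours of a turn
   vertex at level +-h lie below it in its block.  So if R had turn vertices of
   level +-h at positions i < j < k, the part of R from the last root before j
   (there is one, since R visits a root at i) to the first root after j would
   stay in the block of the vertex at j, which would then have three distinct
   roots. *)

Lemma uphalf_double_pred j : 0 < j -> uphalf (j.*2).-1 = j.
Proof. by case: j => // j _; rewrite doubleS /= half_double. Qed.

Lemma edgeH_cases l (u w : vtx) : edgeH l u w ->
  [\/ absz u.1 = (absz w.1).+1 /\ uphalf w.2 = u.2,
      [/\ absz u.1 = 0, absz w.1 = 0 & uphalf u.2 = uphalf w.2]
    | absz u.1 = absz w.1 /\ u.2 = w.2].
Proof.
have child_cases (h j : nat) (c : int) : 0 < j -> absz c = h ->
    (w == (c, (j.*2).-1)) || (w == (c, j.*2)) ->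
    absz w.1 = h /\ uphalf w.2 = j.
  move=> j_gt0 <- /orP[]/eqP-> /=; first by rewrite uphalf_double_pred.
  by rewrite uphalf_double.
case/orP=> [/orP[/orP[|]|]|].
1,2: case/hasP=> h; rewrite mem_iota => h_range /hasP[j]; rewrite mem_iota;
  case/andP=> j_gt0 _ /andP[/eqP-> /(child_cases h.-1 j)];
  case=> //=; [lia | move=> -> ->; constructor 1; split => //; lia].
- by case/andP=> /eqP-> /eqP->; constructor 3; split => //=; lia.
- case/hasP=> j; rewrite mem_iota => /andP[j_gt0 _] /andP[/eqP-> /eqP->].
  by constructor 2; split => //=; rewrite uphalf_double_pred ?uphalf_double.
Qed.

(* For |v.1| <= h, the index j' of the ancestor v_{+-h,j'} of v. *)
Definition ancestor (h : nat) (v : vtx) : nat := iter (h - absz v.1) uphalf v.2.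

Lemma adjH_level l (u w : vtx) : adjH l u w ->
  absz u.1 <= (absz w.1).+1 /\ absz w.1 <= (absz u.1).+1.
Proof. by case/orP=> /edgeH_cases[[]|[]|[]]; lia. Qed.

Lemma edgeH_ancestor l h (u w : vtx) : 0 < h -> edgeH l u w ->
  absz u.1 <= h -> absz w.1 <= h -> ancestor h u = ancestor h w.
Proof.
rewrite /ancestor => h_gt0 /edgeH_cases[[lvl_uw <-]|[-> -> up_eq]|[-> ->]] //.
  by rewrite lvl_uw => uh _; rewrite -[in RHS]subnSK // iterSr.
by case: h h_gt0 => // h _ _ _; rewrite subn0 !iterSr up_eq.
Qed.

Lemma adjH_ancestor l h (u w : vtx) : 0 < h -> adjH l u w ->
  absz u.1 <= h -> absz w.1 <= h -> ancestor h u = ancestor h w.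
Proof.
move=> h_gt0 /orP[uw|wu] uh wh; first exact: edgeH_ancestor uw uh wh.
by rewrite (edgeH_ancestor h_gt0 wu).
Qed.

Lemma sorted_pedges (r : rel vtx) (s : seq vtx) :
  all (fun e => r e.1 e.2) (pedges s) = sorted r s.
Proof. by case: s => // x s; elim: s x => //= y s IHs x; rewrite -IHs. Qed.

Lemma path_nbrs_cons2 (a b v : vtx) (s : seq vtx) :
  path_nbrs [:: a, b & s] v =
  (if (a == v) || (b == v) then [:: if a == v then b else a] else [::])
    ++ path_nbrs (b :: s) v.
Proof. by rewrite /path_nbrs /pedges /=; case: ifP. Qed.

Lemma path_nbrs_notin (s : seq vtx) (v : vtx) : v \notin s -> path_nbrs s v = [::].
Proof.
elim: s => [|a [|b s] IHs] //; rewrite path_nbrs_cons2 !inE !negb_or.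
case/and3P=> av bv vs; rewrite IHs ?inE ?negb_or ?bv //.
by rewrite eq_sym (negPf av) eq_sym (negPf bv).
Qed.

Lemma path_nbrs_nth (s : seq vtx) x0 i : uniq s -> i < size s ->
  path_nbrs s (nth x0 s i) =
  (if i is i'.+1 then [:: nth x0 s i'] else [::]) ++
  (if i.+1 < size s then [:: nth x0 s i.+1] else [::]).
Proof.
elim: s i => [|a [|b s] IHs] [|i] //= /andP[a_fresh uniq_bs] i_lt.
  by rewrite path_nbrs_cons2 eqxx path_nbrs_notin.
rewrite path_nbrs_cons2 (IHs i) //; case: i i_lt => [|i] i_lt /=.
  by rewrite eqxx orbT; case: eqP a_fresh => // ->; rewrite mem_head.
have ai : (a == nth x0 s i) = false.
  by apply: contraNF a_fresh => /eqP->; rewrite inE mem_nth ?orbT.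
have bi : (b == nth x0 s i) = false.
  by case/andP: uniq_bs => b_fresh _; apply: contraNF b_fresh => /eqP->; rewrite mem_nth.
by rewrite ai bi.
Qed.

Lemma absz_child_level (a : int) : a != 0%R -> absz (child_level a) = (absz a).-1.
Proof. by rewrite /child_level; case: ifP; lia. Qed.

Lemma turn_vertex_nth (R : seq vtx) x0 i : uniq R -> i < size R ->
  turn_vertex R (nth x0 R i) ->
  [/\ 0 < i, i.+1 < size R, absz (nth x0 R i.-1).1 = (absz (nth x0 R i).1).-1
    & absz (nth x0 R i.+1).1 = (absz (nth x0 R i).1).-1].
Proof.
move=> uniqR i_lt /and4P[_ v_nz]; rewrite /degR path_nbrs_nth //.
case: i i_lt v_nz => [|i] i_lt v_nz; case: ifP => //= i_lt' _ nbrs.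
have child_nbr u : u \in [:: nth x0 R i; nth x0 R i.+2] ->
    absz u.1 = (absz (nth x0 R i.+1).1).-1.
  by rewrite (perm_mem nbrs) !inE => /orP[]/eqP-> /=; rewrite absz_child_level.
by split; rewrite // child_nbr // !inE eqxx ?orbT.
Qed.

Lemma roots_collide h (x y z : vtx) :
  absz x.1 = h -> absz y.1 = h -> absz z.1 = h ->
  ancestor h x = ancestor h y -> ancestor h z = ancestor h y ->
  [\/ x = y, z = y | x = z].
Proof.
rewrite /ancestor; case: x y z => [x1 x2] [y1 y2] [z1 z2] /= hx hy hz.
rewrite hx hy hz subnn /= => -> ->.
have [->|[->|->]] : x1 = y1 \/ z1 = y1 \/ x1 = z1 by lia.
- exact: Or31.
- exact: Or32.
- exact: Or33.
Qed.

Lemma count_sorted_le2 (P : pred nat) (s : seq nat) : sorted ltn s ->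
  (forall i j k, i < j < k -> P i -> P j -> P k -> False) -> count P s <= 2.
Proof.
move=> /(sorted_filter ltn_trans P) sorted_Ps no_triple; rewrite -size_filter.
have P_Ps x : x \in filter P s -> P x by rewrite mem_filter => /andP[].
case: (filter P s) sorted_Ps P_Ps => [|i [|j [|k t]]] //= /and3P[ij jk _] P_Ps.
by case: (no_triple i j k); rewrite ?ij ?P_Ps // !inE eqxx ?orbT.
Qed.

Section LevelProfile.
Variables (n h : nat) (lvl blk : nat -> nat).
Hypothesis lvl_step : forall k, k.+1 < n -> lvl k <= (lvl k.+1).+1 /\ lvl k.+1 <= (lvl k).+1.
Hypothesis blk_step : forall k, k.+1 < n -> lvl k <= h -> lvl k.+1 <= h -> blk k = blk k.+1.

Definition turn_at k := [&& 0 < k, k.+1 < n, lvl k == h, lvl k.-1 < h & lvl k.+1 < h].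

Lemma last_top_before a d : a + d < n -> lvl a = h -> lvl (a + d) < h ->
  exists2 p, p < a + d & lvl p = h /\ blk p = blk (a + d).
Proof.
elim: d => [|d IHd]; first by rewrite addn0 => _ ->; rewrite ltnn.
rewrite addnS => lt_n top_a below; have [down _] := lvl_step lt_n.
have [top|not_top] := eqVneq (lvl (a + d)) h.
  by exists (a + d) => //; split => //; apply: blk_step => //; lia.
have [|p p_lt [p_top blk_p]] := IHd (ltnW lt_n) top_a; first by lia.
by exists p; [lia | rewrite blk_p; split => //; apply: blk_step => //; lia].
Qed.

Lemma first_top_after a d : a + d < n -> lvl a < h -> lvl (a + d) = h ->
  exists2 q, a < q < n & lvl q = h /\ blk q = blk a.
Proof.
elim: d a => [|d IHd] a; first by rewrite addn0 => _ /[swap] ->; rewrite ltnn.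
rewrite -addSnnS => lt_n below top_end.
have a_lt : a.+1 < n by apply: leq_ltn_trans lt_n; apply: leq_addr.
have [_ up] := lvl_step a_lt.
have [top|not_top] := eqVneq (lvl a.+1) h.
  exists a.+1; first by rewrite ltnSn.
  by split => //; symmetry; apply: blk_step => //; lia.
have [|q q_lt [q_top blk_q]] := IHd a.+1 lt_n _ top_end; first by lia.
by exists q; [lia | rewrite blk_q; split => //; symmetry; apply: blk_step => //; lia].
Qed.

Lemma count_turn_at_le2 :
  (forall p j q, p < j < q -> q < n -> lvl p = h -> lvl j = h -> lvl q = h ->
     blk p = blk j -> blk q = blk j -> False) ->
  count turn_at (iota 0 n) <= 2.
Proof.
move=> no_three_tops; apply: count_sorted_le2 (iota_ltn_sorted 0 n) _.
move=> i j k /andP[ij jk] /and5P[_ _ /eqP top_i _ _].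
move=> /and5P[j_gt0 j_lt /eqP top_j below_j below_j'] /and5P[_ k_lt /eqP top_k _ _].
have [p p_lt [top_p blk_p]] : exists2 p, p < j.-1 & lvl p = h /\ blk p = blk j.-1.
  by have := @last_top_before i (j.-1 - i); rewrite subnKC; [apply; lia | lia].
have [q q_lt [top_q blk_q]] : exists2 q, j.+1 < q < n & lvl q = h /\ blk q = blk j.+1.
  by have := @first_top_after j.+1 (k - j.+1); rewrite subnKC; [apply; lia | lia].
apply: (no_three_tops p j q) => //; [lia | lia | rewrite blk_p | rewrite blk_q].
- by rewrite -[in RHS](prednK j_gt0); apply: blk_step; rewrite ?prednK //; lia.
- by symmetry; apply: blk_step; lia.
Qed.
End LevelProfile.

Lemma count_top_turn_vertices (R : seq vtx) x0 h : uniq R -> 0 < h ->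
  count (fun v => (absz v.1 == h) && turn_vertex R v) R <=
  count (turn_at (size R) h (fun k => absz (nth x0 R k).1)) (iota 0 (size R)).
Proof.
move=> uniqR h_gt0; rewrite -[X in count _ X](mkseq_nth x0 R) count_map.
set lvl := fun k => absz (nth x0 R k).1.
rewrite -(@eq_in_count _
  (fun k => (k < size R) && (lvl k == h) && turn_vertex R (nth x0 R k))).
  apply: sub_count => k /andP[/andP[k_lt /eqP top] /(turn_vertex_nth uniqR k_lt)].
  case=> k_gt0 k_lt' below below'.
  rewrite /turn_at k_gt0 k_lt' top eqxx /lvl below below' -/(lvl k) top.
  by rewrite ltn_predL h_gt0.
by move=> k; rewrite mem_iota => /andP[_ ->].
Qed.

Theorem lemma3 (l : nat) (R : seq vtx) (h : nat) :
  (1 <= l)%N -> is_path l R -> (1 <= h <= l)%N ->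
  (count (fun v : vtx => (absz v.1 == h) && turn_vertex R v) R <= 2)%N.
Proof.
move=> _ /and4P[_ uniqR _ edgesR] /andP[h_gt0 _].
pose x0 : vtx := (0%R, 0).
have adj k : k.+1 < size R -> adjH l (nth x0 R k) (nth x0 R k.+1).
  by move: edgesR; rewrite sorted_pedges => /sortedP; apply.
apply: leq_trans (count_top_turn_vertices x0 uniqR h_gt0) _.
apply: (count_turn_at_le2 (blk := fun k => ancestor h (nth x0 R k))).
- by move=> k /adj /adjH_level.
- by move=> k /adj /adjH_ancestor; apply.
move=> p j q /andP[pj jq] q_lt top_p top_j top_q blk_p blk_q.
have [p_lt j_lt] : p < size R /\ j < size R by lia.
case: (roots_collide top_p top_j top_q blk_p blk_q) => /eqP; rewrite nth_uniq //.
- by rewrite ltn_eqF.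
- by rewrite gtn_eqF.
- by rewrite ltn_eqF // (ltn_trans pj jq).
Qed.
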